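(* Let $N\ge 2$, let $T_N$ be the homogeneous tree in which every vertex has degree $N$, and fix a root $o$. Let $m>1$ and $(p,q)\in G_3=\{(p,q): p<0,\ m-1<q<m\}$. Then for every $\epsilon>0$ there exists a weight $\mu$ on $T_N$ such that $$W_o(n)\asymp n^{\frac{q}{q-m+1}}(\ln n)^{\frac{m-1}{q-m+1}+\epsilon}\quad\text{for } n\ge 2,$$ and the inequality $\Delta_m u+u^p|\nabla u|^q\le 0$ on $T_N$ admits a nontrivial positive solution.
   Context: A weight on a graph $(V,E)$ is a symmetric function $\mu:V\times V\to[0,\infty)$ with $\mu_{xy}=\mu_{yx}>0$ if and only if $x\sim y$ (adjacent); $\mu(x)=\sum_{y\sim x}\mu_{xy}$. For $m>1$, $\Delta_m u(x)=\frac{1}{\mu(x)}\sum_{y\sim x}\mu_{xy}|u(y)-u(x)|^{m-2}(u(y)-u(x))$ and $|\nabla u(x)|=\big(\sum_{y\sim x}\frac{\mu_{xy}}{2\mu(x)}(u(y)-u(x))^2\big)^{1/2}$. $d$ is the graph distance, $B(o,n)=\{x: d(o,x)\le n\}$, $W_o(n)=\sum_{x\in B(o,n),\,y\in V,\,d(o,x)<d(o,y)}\mu_{xy}$. $f(n)\asymp g(n)$ for $n\ge2$ means there are constants $c,C>0$ with $c\,g(n)\le f(n)\le C\,g(n)$ for all $n\ge 2$. A nontrivial positive solution is a non-constant $u:V\to(0,\infty)$ with $\Delta_m u(x)+u(x)^p|\nabla u(x)|^q\le0$ for all $x\in V$. *)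

From HB Require Import structures.
From mathcomp Require Import all_boot all_order all_algebra.
From mathcomp Require Import all_classical all_reals all_analysis.
Set Implicit Arguments. Unset Strict Implicit. Unset Printing Implicit Defensive.
Import Order.TTheory GRing.Theory Num.Theory.
Local Open Scope ring_scope.

(* ---------- The homogeneous tree T_N ----------
   Vertices are finite words s = [a0; a1; ...; ak] with a0 < N and ai < N-1
   for i >= 1; the root o is the empty word.  The neighbours of s are its
   children  rcons s a  (a < N if s is the root, a < N-1 otherwise) and,
   if s is not the root, its parent (s with last letter removed).
   Hence every vertex has degree exactly N. *)

Definition validb (N : nat) (s : seq nat) : bool :=
  if s is a :: r then (a < N)%N && all (fun b => (b < N.-1)%N) r else true.

Definition vtx (N : nat) := {s : seq nat | validb N s}.

Definition nchild (N : nat) (s : seq nat) : nat :=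
  if s is [::] then N else N.-1.

Definition root (N : nat) : vtx N := exist (fun s => validb N s) [::] isT.

Definition nbrs (N : nat) (x : vtx N) : seq (vtx N) :=
  pmap insub
    ([seq rcons (val x) a | a <- iota 0 (nchild N (val x))] ++
     (if val x is [::] then [::] else [:: take (size (val x)).-1 (val x)])).

Definition adj (N : nat) (x y : vtx N) : bool := y \in nbrs x.

(* graph distance d(o,x) from the root o; in this tree it is the word length *)
Definition depth (N : nat) (x : vtx N) : nat := size (val x).

Fixpoint words (N : nat) (k : nat) : seq (seq nat) :=
  if k is k'.+1 then
    flatten [seq [seq rcons s a | a <- iota 0 (nchild N s)] | s <- words N k']
  else [:: [::]].

Definition ball (N : nat) (n : nat) : seq (vtx N) :=
  pmap insub (flatten [seq words N k | k <- iota 0 n.+1]).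

Section Weighted.
Variables (R : realType) (N : nat).

Definition is_weight (mu : vtx N -> vtx N -> R) : Prop :=
  (forall x y, mu x y = mu y x) /\
  (forall x y, 0 <= mu x y) /\
  (forall x y, 0 < mu x y <-> adj x y).

Definition muv (mu : vtx N -> vtx N -> R) (x : vtx N) : R :=
  \sum_(y <- nbrs x) mu x y.

(* W_o(n) = sum_{x in B(o,n), y in V, d(o,x) < d(o,y)} mu_xy
   (mu_xy = 0 unless y ~ x, so only neighbours contribute) *)
Definition W (mu : vtx N -> vtx N -> R) (n : nat) : R :=
  \sum_(x <- ball N n) \sum_(y <- nbrs x | (depth x < depth y)%N) mu x y.

Definition mlap (mu : vtx N -> vtx N -> R) (m : R) (u : vtx N -> R)
    (x : vtx N) : R :=
  (muv mu x)^-1 *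
  \sum_(y <- nbrs x) mu x y * (`|u y - u x| `^ (m - 2)) * (u y - u x).

Definition gradn (mu : vtx N -> vtx N -> R) (u : vtx N -> R) (x : vtx N) : R :=
  Num.sqrt (\sum_(y <- nbrs x) mu x y / (2 * muv mu x) * (u y - u x) ^+ 2).

End Weighted.

From Pilot Require Import Defs.
From HB Require Import structures.
From mathcomp Require Import all_boot all_order all_algebra.
From mathcomp Require Import all_classical all_reals all_analysis.
From mathcomp Require Import ring lra zify.
Import Order.TTheory GRing.Theory Num.Theory.
Local Open Scope ring_scope.
Set Implicit Arguments. Unset Strict Implicit. Unset Printing Implicit Defensive.

(* Take a radial weight: the edges between the spheres of radii [k - 1] and
   [k] share a total weight [E_k], so that [W_o(n) = E_1 + ... + E_(n+1)], and
   [E_k ~ k^gam (ln k)^bet] with [gam = (m - 1) / (q - m + 1)] and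
   [bet = gam + eps] has the required growth.
   For a radial [u = U(d(o, x))] with decreasing [U] and decrements
   [a_k = U_(k-1) - U_k], the m-Laplacian at level [d] is
   [- (F_(d+1) - F_d) / (E_d + E_(d+1))], where [F_k = E_k a_k^(m-1)] is the
   flux through the sphere of radius [k], while [|nabla u| <= max(a_d, a_(d+1))].
   Prescribing [F_k = 2 - (ln 2 / ln (k + 1))^del] with [del = eps / gam]
   makes [F_(k+1) - F_k] of order [psi_k = 1 / (k (ln k)^(1+del))], and so is
   [E_k a_k^q ~ E_k^(-1/gam)]; hence [u^p |nabla u|^q <= - Delta_m u] as soon
   as [u^p] is small enough.  Since [a_k = O(k^(-1/(q-m+1)))] with
   [q - m + 1 < 1], the decrements are summable, so [U] can be kept above a
   positive constant large enough to make [u^p] (with [p < 0]) small. *)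

Section Tree.
Variable N : nat.

Lemma validb_rcons s a : validb N (rcons s a) = validb N s && (a < nchild N s)%N.
Proof.
case: s => [|b r] /=; first by rewrite andbT.
by rewrite all_rcons; case: (b < N)%N; case: (a < N.-1)%N; rewrite /= ?andbT ?andbF.
Qed.

Lemma validb_take s k : validb N s -> validb N (take k s).
Proof.
case: s => [|a r] //=; case: k => [|k] //= /andP[-> H] /=.
by apply/allP => b /mem_take /(allP H).
Qed.

Lemma mem_words k s : s \in words N k -> validb N s /\ size s = k.
Proof.
elim: k s => [|k IH] s /=; first by rewrite inE => /eqP ->.
move=> /flattenP [l /mapP [t tin ->]] /mapP [a ain ->].
have [vt st] := IH _ tin.
by rewrite validb_rcons vt size_rcons st mem_iota in ain *.
Qed.

Definition nbr_words (x : vtx N) : seq (seq nat) :=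
  [seq rcons (val x) a | a <- iota 0 (nchild N (val x))] ++
  (if val x is [::] then [::] else [:: take (size (val x)).-1 (val x)]).

Lemma nbrsE x : nbrs x = pmap insub (nbr_words x). Proof. by []. Qed.

Lemma all_validb_nbr_words x : all (validb N) (nbr_words x).
Proof.
rewrite all_cat; apply/andP; split.
  apply/allP => s /mapP [a]; rewrite mem_iota add0n => /andP[_ ha] ->.
  by rewrite validb_rcons (valP x) ha.
case: (val x) (valP x) => [|b r] //= H.
by rewrite andbT; apply: (@validb_take (b :: r)).
Qed.

Lemma parent_rcons (s : seq nat) a :
  (if rcons s a is [::] then [::] else [:: take (size (rcons s a)).-1 (rcons s a)])
  = [:: s].
Proof.
have E : take (size (rcons s a)).-1 (rcons s a) = s.
  by rewrite size_rcons /= -cats1 take_size_cat.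
move: E; case Er: (rcons s a) => [|c l]; first by case: s Er.
by move=> ->.
Qed.

Lemma adj_sym (x y : vtx N) : adj x y = adj y x.
Proof.
suff H : forall x y : vtx N, adj x y -> adj y x by apply/idP/idP; apply: H.
move=> {x y} [s vs] [t vt]; rewrite /adj !nbrsE !mem_pmap_sub /nbr_words mem_cat /=.
case/orP => [/mapP [a _ ->]|].
  by rewrite mem_cat parent_rcons inE eqxx orbT.
case: (lastP s) vs => [|s' z] // vs; rewrite parent_rcons inE => /eqP ->.
rewrite mem_cat map_f // mem_iota add0n /=.
by move: vs; rewrite validb_rcons => /andP[].
Qed.

Lemma adj_depth_max (x y : vtx N) : adj x y -> (0 < maxn (depth x) (depth y))%N.
Proof.
case: x y => [s vs] [t vt]; rewrite /adj nbrsE mem_pmap_sub /nbr_words mem_cat /depth /=.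
case/orP => [/mapP [a _ ->]|]; first by rewrite size_rcons leq_max orbT.
by case: s vs => [|b r] //= _ _; rewrite leq_max.
Qed.

Definition branching (k : nat) : nat := if k is 0 then N else N.-1.

Lemma nchild_size s : nchild N s = branching (size s).
Proof. by case: s. Qed.

Lemma size_wordsS k : size (words N k.+1) = (size (words N k) * branching k)%N.
Proof.
rewrite /= size_flatten /shape -map_comp sumnE big_map.
rewrite (eq_big_seq (fun _ => branching k)); last first.
  by move=> s /mem_words [_ <-] /=; rewrite size_map size_iota nchild_size.
by rewrite big_const_seq count_predT iter_addn_0 mulnC.
Qed.

Lemma branching_gt0 k : (1 < N)%N -> (0 < branching k)%N.
Proof. by case: k => [|k] /=; lia. Qed.

Lemma size_words_gt0 k : (1 < N)%N -> (0 < size (words N k))%N.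
Proof.
by move=> N1; elim: k => [|k IH] //; rewrite size_wordsS muln_gt0 IH branching_gt0.
Qed.

Section Sums.
Variable V : nmodType.

Lemma big_pmap_insub (l : seq (seq nat)) (H : seq nat -> V) :
  all (validb N) l ->
  \sum_(y <- pmap (insub : _ -> option (vtx N)) l) H (val y) = \sum_(s <- l) H s.
Proof.
move=> al; rewrite big_pmap; apply: eq_big_seq => s sin.
by rewrite insubT ?(allP al) //=.
Qed.

Lemma big_nbrs (x : vtx N) (H : seq nat -> V) :
  \sum_(y <- nbrs x) H (val y) =
  \sum_(a <- iota 0 (nchild N (val x))) H (rcons (val x) a) +
  (if val x is [::] then 0 else H (take (size (val x)).-1 (val x))).
Proof.
rewrite nbrsE big_pmap_insub ?all_validb_nbr_words // big_cat big_map /=.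
by case: (val x) => [|b r] /=; rewrite ?big_nil ?big_cons ?big_nil ?addr0.
Qed.

Lemma big_nbrs_depth (x : vtx N) (K : nat -> V) :
  \sum_(y <- nbrs x) K (depth y) =
  K (depth x).+1 *+ branching (depth x) +
  (if depth x is 0 then 0 else K (depth x).-1).
Proof.
rewrite /depth (big_nbrs x (fun s => K (size s))).
under eq_bigr do rewrite size_rcons.
rewrite big_const_seq count_predT size_iota -nchild_size iter_addr_0.
by case: (val x) => [|b r] //=; rewrite size_take /= ltnSn.
Qed.

Lemma big_ball n (H : seq nat -> V) :
  \sum_(x <- Defs.ball N n) H (val x) = \sum_(k <- iota 0 n.+1) \sum_(s <- words N k) H s.
Proof.
rewrite /Defs.ball big_pmap_insub ?big_flatten ?big_map //.
by apply/allP => s /flattenP [l /mapP [k _ ->]] /mem_words [].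
Qed.

End Sums.
End Tree.

Section RadialWeight.
Variables (R : realType) (N : nat) (E : nat -> R).
Hypothesis N1 : (1 < N)%N.

(* The [size (words N k)] edges joining the spheres of radii [k - 1] and [k]
   share the total weight [E k]. *)
Definition edge_weight (k : nat) : R :=
  if k is 0 then 0 else E k / (size (words N k))%:R.

Definition radial_weight (x y : vtx N) : R :=
  if adj x y then edge_weight (maxn (depth x) (depth y)) else 0.

Let size_words_neq0 k : (size (words N k))%:R != 0 :> R.
Proof. by rewrite pnatr_eq0 -lt0n size_words_gt0. Qed.

Lemma branching_edge_weight k :
  edge_weight k.+1 *+ branching N k = E k.+1 / (size (words N k))%:R.
Proof.
have b0 : (branching N k)%:R != 0 :> R by rewrite pnatr_eq0 -lt0n branching_gt0.
by rewrite /= size_wordsS natrM -mulr_natr; field; rewrite b0 size_words_neq0.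
Qed.

Lemma radial_weight_is_weight :
  (forall k, (0 < k)%N -> 0 < E k) -> is_weight radial_weight.
Proof.
move=> Ep; have wp k : (0 < k)%N -> 0 < edge_weight k.
  by case: k => [|k] // _; rewrite divr_gt0 ?Ep // ltr0n size_words_gt0.
split; [|split] => x y; rewrite /radial_weight.
- by rewrite adj_sym maxnC.
- by case: ifP => // /adj_depth_max /wp /ltW.
- by case: ifP => [/adj_depth_max /wp|_]; split; rewrite ?ltxx.
Qed.

Lemma W_radial_weight n : W radial_weight n = \sum_(k <- iota 0 n.+1) E k.+1.
Proof.
have outward x : \sum_(y <- nbrs x | (depth x < depth y)%N) radial_weight x y
    = edge_weight (depth x).+1 *+ branching N (depth x).
  pose K j := if (depth x < j)%N then edge_weight (maxn (depth x) j) else 0.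
  rewrite big_mkcond /= (eq_big_seq (fun y => K (depth y))); last first.
    by move=> y yin; rewrite /K /radial_weight /adj yin.
  rewrite big_nbrs_depth /K ltnSn (maxn_idPr (leqnSn _)); clear K.
  by case: (depth x) => [|d]; rewrite ?addr0 // ltnNge leqnSn addr0.
rewrite /W (eq_bigr _ (fun x _ => outward x)).
rewrite (big_ball N n (fun s => edge_weight (size s).+1 *+ branching N (size s))).
apply: eq_big_seq => k _.
rewrite (eq_big_seq (fun _ => edge_weight k.+1 *+ branching N k)); last first.
  by move=> s /mem_words [_ ->].
rewrite big_const_seq count_predT iter_addr_0 branching_edge_weight -mulr_natr.
by field.
Qed.

Hypothesis E0 : E 0%N = 0.

Lemma big_nbrs_radial_weight (x : vtx N) (G : nat -> R) :
  \sum_(y <- nbrs x) radial_weight x y * G (depth y) =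
  (E (depth x).+1 * G (depth x).+1 + E (depth x) * G (depth x).-1) /
  (size (words N (depth x)))%:R.
Proof.
pose K j := edge_weight (maxn (depth x) j) * G j.
rewrite (eq_big_seq (fun y => K (depth y))); last first.
  by move=> y yin; rewrite /K /radial_weight /adj yin.
rewrite big_nbrs_depth /K (maxn_idPr (leqnSn _)) -mulrnAl branching_edge_weight.
clear K.
case: (depth x) => [|d] /=; first by rewrite E0 !mul0r !addr0 mulrAC.
by rewrite (maxn_idPl (leqnSn _)) mulrDl; congr (_ + _); rewrite mulrAC.
Qed.

Lemma muv_radial_weight x :
  muv radial_weight x =
  (E (depth x).+1 + E (depth x)) / (size (words N (depth x)))%:R.
Proof.
have := big_nbrs_radial_weight x (fun _ => 1); rewrite !mulr1 => <-.
by apply: eq_bigr => y _; rewrite mulr1.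
Qed.

Section RadialFunction.
Variables (U : nat -> R) (x : vtx N).
Let d := depth x.
Hypothesis Ed_neq0 : E d.+1 + E d != 0.

Lemma mlap_radial_weight m :
  mlap radial_weight m (fun y => U (depth y)) x =
  (E d.+1 * (`|U d.+1 - U d| `^ (m - 2) * (U d.+1 - U d)) +
   E d * (`|U d.-1 - U d| `^ (m - 2) * (U d.-1 - U d))) / (E d.+1 + E d).
Proof.
rewrite /mlap muv_radial_weight.
under eq_bigr do rewrite -mulrA.
rewrite (big_nbrs_radial_weight x
  (fun j => `|U j - U d| `^ (m - 2) * (U j - U d))).
by field; rewrite size_words_neq0 Ed_neq0.
Qed.

Lemma gradn_radial_weight :
  gradn radial_weight (fun y => U (depth y)) x =
  Num.sqrt ((E d.+1 * (U d.+1 - U d) ^+ 2 + E d * (U d.-1 - U d) ^+ 2) /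
            (2 * (E d.+1 + E d))).
Proof.
rewrite /gradn muv_radial_weight; congr Num.sqrt.
under eq_bigr do rewrite mulrAC -mulrA.
rewrite (big_nbrs_radial_weight x (fun j => (U j - U d) ^+ 2 / _)).
by field; rewrite size_words_neq0 Ed_neq0.
Qed.

End RadialFunction.
End RadialWeight.

Section RealInequalities.
Variable R : realType.
Implicit Types x y r t : R.

Lemma gt0_powRD x r t : 0 < x -> x `^ (r + t) = x `^ r * x `^ t.
Proof. by move=> x0; rewrite powRD // (gt_eqF x0) implybT. Qed.

Lemma gt0_powRM x y r : 0 < x -> 0 < y -> (x * y) `^ r = x `^ r * y `^ r.
Proof. by move=> x0 y0; rewrite powRM // ltW. Qed.

Lemma gt0_powRV x r : 0 < x -> (x^-1) `^ r = (x `^ r)^-1.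
Proof. by move=> x0; rewrite /powR !gt_eqF ?invr_gt0 // lnV ?posrE // mulrN expRN. Qed.

Lemma ler_powR2r r x y : 0 <= r -> 0 <= x -> x <= y -> x `^ r <= y `^ r.
Proof. by move=> r0 x0 xy; apply: ge0_ler_powR => //; rewrite nnegrE (le_trans x0). Qed.

Lemma le0_ler_powR2r r x y : r <= 0 -> 0 < x -> x <= y -> y `^ r <= x `^ r.
Proof.
move=> r0 x0 xy; have y0 : 0 < y by apply: lt_le_trans xy.
rewrite /powR !gt_eqF // ler_expR ler_wnM2l // ler_ln ?posrE //.
Qed.

Lemma lnB_ge x y : 0 < x -> 0 < y -> (y - x) / y <= ln y - ln x.
Proof.
move=> x0 y0; have xy0 := divr_gt0 x0 y0.
have : ln (1 + (x / y - 1)) <= x / y - 1 by apply: le_ln1Dx; lra.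
rewrite addrC subrK ln_div ?posrE //.
have -> : (y - x) / y = 1 - x / y by field; rewrite gt_eqF.
lra.
Qed.

Lemma powRN_B_ge x y r : 0 < x -> x <= y -> 0 < r ->
  r * ((y - x) / y) * y `^ (- r) <= x `^ (- r) - y `^ (- r).
Proof.
move=> x0 xy r0; have y0 : 0 < y by apply: lt_le_trans xy.
have -> : x `^ (- r) = y `^ (- r) * expR (r * (ln y - ln x)).
  by rewrite /powR !gt_eqF // -expRD; congr expR; ring.
have := expR_ge1Dx (r * (ln y - ln x)); have := lnB_ge x0 y0.
have : 0 < y `^ (- r) by apply: powR_gt0.
move=> py hln hexp.
have : r * ((y - x) / y) <= r * (ln y - ln x) by rewrite ler_pM2l.
nra.
Qed.

Lemma ge0_norm_powR_mul m t : 1 < m -> 0 <= t ->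
  `|t| `^ (m - 2) * t = t `^ (m - 1).
Proof.
move=> m1 t0; rewrite ger0_norm // mulrC (_ : m - 2 = m - 1 - 1); last by ring.
by rewrite mulr_powRB1 // subr_gt0.
Qed.

Section WeightedMean.
Variables (P Q al be : R).
Hypotheses (P0 : 0 < P) (Q0 : 0 <= Q) (al0 : 0 <= al) (be0 : 0 <= be).

Lemma sqrt_mean_le_max M : al <= M -> be <= M ->
  Num.sqrt ((P * al ^+ 2 + Q * be ^+ 2) / (2 * (P + Q))) <= M.
Proof.
move=> aM bM; have M0 : 0 <= M by apply: le_trans aM.
rewrite -(ger0_norm M0) -sqrtr_sqr; apply: ler_wsqrtr.
have a2 : al ^+ 2 <= M ^+ 2 by rewrite ler_sqr ?nnegrE.
have b2 : be ^+ 2 <= M ^+ 2 by rewrite ler_sqr ?nnegrE.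
rewrite ler_pdivrMr; last by rewrite mulr_gt0 ?ltr0n ?ltr_wpDr.
have := ler_wpM2l (ltW P0) a2; have := ler_wpM2l Q0 b2.
have : 0 <= (P + Q) * M ^+ 2.
  by rewrite mulr_ge0 ?sqr_ge0 // addr_ge0 // ltW.
lra.
Qed.

Lemma powR_sqrt_mean_le q : 0 < q ->
  Num.sqrt ((P * al ^+ 2 + Q * be ^+ 2) / (2 * (P + Q))) `^ q <= al `^ q + be `^ q.
Proof.
move=> q0; have pa := powR_ge0 al q; have pb := powR_ge0 be q.
have [ab|ba] := leP al be.
  apply: le_trans (ler_powR2r (ltW q0) (sqrtr_ge0 _) (sqrt_mean_le_max ab (lexx be))) _.
  by rewrite lerDr.
apply: le_trans (ler_powR2r (ltW q0) (sqrtr_ge0 _) (sqrt_mean_le_max (lexx al) (ltW ba))) _.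
by rewrite lerDl.
Qed.

End WeightedMean.
End RealInequalities.

Lemma radial_supersolution (R : realType) (N : nat) (E : nat -> R) (m p q : R)
    (U a : nat -> R) :
  (1 < N)%N -> E 0%N = 0 -> (forall k, (0 < k)%N -> 0 < E k) -> 1 < m -> 0 < q ->
  (forall d, U d.-1 - U d = a d) -> (forall d, 0 <= a d) ->
  (forall d, U d `^ p * ((E d + E d.+1) * (a d `^ q + a d.+1 `^ q)) <=
             E d.+1 * a d.+1 `^ (m - 1) - E d * a d `^ (m - 1)) ->
  forall x, mlap (radial_weight (N:=N) E) m (fun y => U (depth y)) x +
            U (depth x) `^ p * gradn (radial_weight (N:=N) E) (fun y => U (depth y)) x `^ q <= 0.
Proof.
move=> N1 E0 Ep m1 q0 Ua a0 Hflux x.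
have E_ge0 k : 0 <= E k by case: k => [|k]; rewrite ?E0 // ltW ?Ep.
have Ed0 : 0 < E (depth x).+1 + E (depth x) by rewrite ltr_wpDr ?Ep.
rewrite mlap_radial_weight ?gradn_radial_weight ?gt_eqF //.
move: Ed0 (Hflux (depth x)); move: (depth x) => d Ed0.
have -> : U d.+1 - U d = - a d.+1 by rewrite -(Ua d.+1); ring.
rewrite Ua sqrrN normrN mulrN !ge0_norm_powR_mul //.
have := powR_sqrt_mean_le (Ep _ (ltn0Sn d)) (E_ge0 d) (a0 d.+1) (a0 d) q0.
set G := Num.sqrt _ `^ q => hG.
have up0 : 0 <= U d `^ p := powR_ge0 _ _.
move=> Hd.
have key : U d `^ p * G <=
    (E d.+1 * a d.+1 `^ (m - 1) - E d * a d `^ (m - 1)) / (E d.+1 + E d).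
  rewrite ler_pdivlMr //; apply: le_trans Hd.
  rewrite [E d + _]addrC [a d `^ q + _]addrC -mulrA [G * _]mulrC.
  by rewrite ler_wpM2l // ler_wpM2l // ltW.
lra.
Qed.

Section Profile.
Variables (R : realType) (m q eps : R).
Hypotheses (m1 : 1 < m) (qlo : m - 1 < q) (qhi : q < m) (eps0 : 0 < eps).

Definition tau := q - m + 1.
Definition gam := (m - 1) / tau.
Definition bet := gam + eps.
Definition del := eps / gam.

Definition growth (t : R) : R := t `^ gam * ln t `^ bet.

Definition xr (k : nat) : R := (k.+1)%:R.
Definition lg (k : nat) : R := ln (xr k).
Definition Ew (k : nat) : R := if k is 0 then 0 else growth (xr k).

Definition flux (k : nat) : R :=
  if k is 0 then 0 else 2 - lg 1 `^ del * lg k `^ (- del).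
Definition decr (k : nat) : R :=
  if k is 0 then 0 else (flux k / Ew k) `^ (m - 1)^-1.
Definition psi (k : nat) : R := (xr k * lg k `^ (1 + del))^-1.

Lemma tau_gt0 : 0 < tau. Proof. by rewrite /tau; move: qlo; lra. Qed.
Lemma tau_lt1 : tau < 1. Proof. by rewrite /tau; move: qhi; lra. Qed.
Lemma gam_gt0 : 0 < gam. Proof. by rewrite /gam divr_gt0 ?tau_gt0 // subr_gt0. Qed.
Lemma bet_gt0 : 0 < bet. Proof. by rewrite /bet addr_gt0 ?gam_gt0. Qed.
Lemma del_gt0 : 0 < del. Proof. by rewrite /del divr_gt0 ?gam_gt0. Qed.
Lemma bet_div_gam : bet / gam = 1 + del.
Proof. by rewrite /bet /del mulrDl mulfV // gt_eqF // gam_gt0. Qed.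

Lemma xr_gt0 k : 0 < xr k. Proof. by rewrite /xr ltr0n. Qed.
Lemma xr_le k k' : (k <= k')%N -> xr k <= xr k'.
Proof. by move=> h; rewrite /xr ler_nat. Qed.
Lemma xrS_le k : xr k.+1 <= 2 * xr k.
Proof. by rewrite /xr -natrM ler_nat; lia. Qed.

Lemma lg_le k k' : (k <= k')%N -> lg k <= lg k'.
Proof. by move=> h; rewrite /lg ler_ln ?posrE ?xr_gt0 ?xr_le. Qed.
Lemma lg_gt0 k : (1 <= k)%N -> 0 < lg k.
Proof. by move=> k1; rewrite /lg ln_gt0 // /xr ltr1n. Qed.
Lemma lgS_le k : (1 <= k)%N -> lg k.+1 <= 2 * lg k.
Proof.
move=> k1; rewrite /lg mulr_natl -lnXn ?xr_gt0 //.
by rewrite ler_ln ?posrE ?exprn_gt0 ?xr_gt0 // /xr -natrX ler_nat expnS expn1; nia.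
Qed.
Lemma lgS_sub_ge k : (xr k.+1)^-1 <= lg k.+1 - lg k.
Proof.
have := lnB_ge (xr_gt0 k) (xr_gt0 k.+1).
by rewrite /xr -natrB // subSnn mul1r.
Qed.

Lemma growth_le t y : 1 <= t -> t <= y -> growth t <= growth y.
Proof.
move=> t1 ty; have t0 : 0 < t by lra.
rewrite /growth ler_pM ?powR_ge0 ?ler_powR2r ?(ltW gam_gt0) ?(ltW bet_gt0) ?ln_ge0 ?(ltW t0) //.
by rewrite ler_ln ?posrE //; lra.
Qed.

Definition cD : R := 2 `^ (gam + bet).

Lemma growth_le_doubling t y : 1 <= t -> 0 < y -> t <= 2 * y -> t <= y ^+ 2 ->
  growth t <= cD * growth y.
Proof.
move=> t1 y0 t2y ty2; have y1 : 1 <= y by nra.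
have lny := ln_ge0 y1; have lnt := ln_ge0 t1.
have t0 : 0 <= t by lra.
have y0' : 0 <= y by lra.
rewrite /growth /cD [2 `^ _]gt0_powRD // mulrACA -!powRM ?ler0n //.
rewrite ler_pM ?powR_ge0 ?ler_powR2r ?(ltW gam_gt0) ?(ltW bet_gt0) //.
have : ln t <= ln (y ^+ 2) by rewrite ler_ln ?posrE ?exprn_gt0 //; lra.
by rewrite lnXn // mulr2n; lra.
Qed.

Lemma Ew_gt0 k : (1 <= k)%N -> 0 < Ew k.
Proof.
by case: k => [|k] // _; rewrite /Ew /growth mulr_gt0 ?powR_gt0 ?xr_gt0 ?lg_gt0.
Qed.

Lemma Ew_le k k' : (1 <= k)%N -> (k <= k')%N -> Ew k <= Ew k'.
Proof.
case: k => [|k] // _; case: k' => [|k'] // h.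
by rewrite growth_le ?xr_le // /xr ler1n.
Qed.

Lemma EwS_le k : (1 <= k)%N -> Ew k.+1 <= cD * Ew k.
Proof.
case: k => [|k] // _; rewrite growth_le_doubling ?xrS_le ?xr_gt0 //.
  by rewrite /xr ler1n.
by rewrite /xr -natrX ler_nat expnS expn1; nia.
Qed.

Lemma sum_Ew_le n : (2 <= n)%N ->
  \sum_(k <- iota 0 n.+1) Ew k.+1 <= 2 `^ (1 + gam + bet) * (n%:R * growth n%:R).
Proof.
move=> n2; have n0 : 0 < n%:R :> R by rewrite ltr0n (leq_trans _ n2).
apply: (@le_trans _ _ (\sum_(k <- iota 0 n.+1) Ew n.+1)).
  by rewrite !big_seq ler_sum // => k; rewrite mem_iota => /andP[_ kn]; apply: Ew_le.
rewrite big_const_seq count_predT size_iota iter_addr_0 -[Ew _ *+ _]mulr_natl.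
have EwS : Ew n.+1 <= cD * growth n%:R.
  apply: growth_le_doubling => //; rewrite /xr ?ler1n // -?natrM -?natrX ler_nat.
    by lia.
  by rewrite expnS expn1; nia.
rewrite -addrA [2 `^ _]gt0_powRD // powRr1 // -/cD mulrACA.
by rewrite ler_pM ?ler0n ?(ltW (Ew_gt0 _)) // -natrM ler_nat; lia.
Qed.

Lemma sum_Ew_ge n : (2 <= n)%N ->
  (2 `^ (1 + gam + bet))^-1 * (n%:R * growth n%:R) <= \sum_(k <- iota 0 n.+1) Ew k.+1.
Proof.
move=> n2; set h := n./2.
have hn : (h <= n.+1)%N by rewrite /h -divn2; apply: leq_trans (leq_div _ _) _.
have half : (n <= (n.+1 - h).*2)%N by rewrite /h -divn2; lia.
rewrite -(subnKC hn) iotaD big_cat add0n.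
apply: (@le_trans _ _ (\sum_(k <- iota h (n.+1 - h)) Ew k.+1)); last first.
  by rewrite lerDr sumr_ge0 // => k _; rewrite ltW ?Ew_gt0.
apply: (@le_trans _ _ (\sum_(k <- iota h (n.+1 - h)) Ew h.+1)); last first.
  by rewrite !big_seq ler_sum // => k; rewrite mem_iota => /andP[hk _]; apply: Ew_le.
rewrite big_const_seq count_predT size_iota iter_addr_0 -[Ew _ *+ _]mulr_natl.
have Ewh : growth n%:R <= cD * Ew h.+1.
  apply: growth_le_doubling; rewrite ?xr_gt0 // /xr.
  - by rewrite ler1n; lia.
  - by rewrite -natrM ler_nat /h -divn2; lia.
  - by rewrite -natrX ler_nat /h -divn2 expnS expn1; nia.
rewrite -addrA [2 `^ _]gt0_powRD // powRr1 // -/cD invfM mulrACA.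
rewrite ler_pM ?mulr_ge0 ?invr_ge0 ?ler0n ?powR_ge0 //.
  by rewrite ler_pdivrMl // -natrM ler_nat; lia.
by rewrite ler_pdivrMl ?powR_gt0.
Qed.

Lemma flux_range k : (1 <= k)%N -> 1 <= flux k <= 2.
Proof.
case: k => [|k] // _; rewrite /flux.
have t0 : 0 < lg 1 `^ del * lg k.+1 `^ (- del) by rewrite mulr_gt0 ?powR_gt0 ?lg_gt0.
have t1 : lg k.+1 `^ (- del) <= lg 1 `^ (- del).
  by apply: le0_ler_powR2r; rewrite ?lg_gt0 ?lg_le // oppr_le0 ltW // del_gt0.
have e : lg 1 `^ del * lg 1 `^ (- del) = 1 by rewrite -gt0_powRD ?lg_gt0 // subrr powRr0.
have : lg 1 `^ del * lg k.+1 `^ (- del) <= 1 by rewrite -e ler_pM2l ?powR_gt0 ?lg_gt0.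
by move=> t2; apply/andP; split; lra.
Qed.

Lemma flux1 : flux 1 = 1.
Proof. by rewrite /flux -gt0_powRD ?lg_gt0 // subrr powRr0; lra. Qed.

Lemma psi_gt0 k : (1 <= k)%N -> 0 < psi k.
Proof. by move=> k1; rewrite /psi invr_gt0 mulr_gt0 ?xr_gt0 ?powR_gt0 ?lg_gt0. Qed.

Lemma psiS_le k : (1 <= k)%N -> psi k.+1 <= psi k.
Proof.
move=> k1; rewrite /psi lef_pV2 ?posrE ?mulr_gt0 ?xr_gt0 ?powR_gt0 ?lg_gt0 //.
rewrite ler_pM ?(ltW (xr_gt0 _)) ?powR_ge0 ?xr_le // ler_powR2r ?(ltW (lg_gt0 _)) ?lg_le //.
by rewrite addr_ge0 ?ler01 ?(ltW del_gt0).
Qed.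

Lemma psiS_ge k : (1 <= k)%N -> psi k / (2 * 2 `^ (1 + del)) <= psi k.+1.
Proof.
move=> k1; rewrite /psi -invfM lef_pV2 ?posrE ?mulr_gt0 ?powR_gt0 ?xr_gt0 ?lg_gt0 //.
have del1 : 0 <= 1 + del by rewrite addr_ge0 ?ler01 ?(ltW del_gt0).
rewrite mulrACA ler_pM ?(ltW (xr_gt0 _)) ?powR_ge0 //; first by rewrite mulrC xrS_le.
by rewrite mulrC -gt0_powRM ?lg_gt0 // ler_powR2r ?(ltW (lg_gt0 _)) ?lgS_le.
Qed.

Definition cF : R := lg 1 `^ del * del / (2 * 2 `^ (1 + del)).

Lemma cF_gt0 : 0 < cF.
Proof.
apply: divr_gt0; first by apply: mulr_gt0; rewrite ?powR_gt0 ?lg_gt0 ?del_gt0.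
by rewrite mulr_gt0 ?powR_gt0.
Qed.

Lemma fluxS_sub_ge k : (1 <= k)%N -> cF * psi k <= flux k.+1 - flux k.
Proof.
case: k => [|k] // _; rewrite /flux.
have Lk := lg_gt0 (ltn0Sn k); have Lk1 := lg_gt0 (ltn0Sn k.+1).
have decay : del * psi k.+2 <= lg k.+1 `^ (- del) - lg k.+2 `^ (- del).
  apply: le_trans (powRN_B_ge Lk (lg_le (leqnSn k.+1)) del_gt0).
  rewrite /psi gt0_powRD // powRr1 ?(ltW Lk1) // powRN !invfM !mulrA.
  rewrite ler_pM2r ?invr_gt0 ?powR_gt0 // ler_pM2r ?invr_gt0 //.
  by rewrite (ler_pM2l del_gt0) lgS_sub_ge.
have -> : 2 - lg 1 `^ del * lg k.+2 `^ (- del) - (2 - lg 1 `^ del * lg k.+1 `^ (- del))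
   = lg 1 `^ del * (lg k.+1 `^ (- del) - lg k.+2 `^ (- del)) by ring.
have -> : cF * psi k.+1 =
    lg 1 `^ del * (del * (psi k.+1 / (2 * 2 `^ (1 + del)))) by rewrite /cF; ring.
rewrite ler_wpM2l ?powR_ge0 //; apply: le_trans decay.
by rewrite ler_wpM2l ?(ltW del_gt0) ?psiS_ge.
Qed.

Lemma decr_gt0 k : (1 <= k)%N -> 0 < decr k.
Proof.
case: k => [|k] // _; rewrite /decr powR_gt0 // divr_gt0 ?Ew_gt0 //.
by case/andP: (flux_range (ltn0Sn k)) => h _; lra.
Qed.

Lemma decr_ge0 k : 0 <= decr k.
Proof. by case: k => [|k]; rewrite ?lexx // ltW ?decr_gt0. Qed.

Lemma Ew_decr_flux k : Ew k * decr k `^ (m - 1) = flux k.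
Proof.
case: k => [|k]; first by rewrite mul0r.
have [F1 _] := andP (flux_range (ltn0Sn k)); have E0 := Ew_gt0 (ltn0Sn k).
rewrite /decr -powRrM mulVf ?powRr1 ?gt_eqF ?subr_gt0 //; last first.
  by rewrite divr_ge0 ?(ltW E0) //; lra.
by field; rewrite gt_eqF.
Qed.

Lemma Ew_powR k r : (1 <= k)%N -> Ew k `^ r = xr k `^ (gam * r) * lg k `^ (bet * r).
Proof.
by case: k => [|k] // _; rewrite /Ew gt0_powRM ?powR_gt0 ?xr_gt0 ?lg_gt0 // !powRrM.
Qed.

Lemma decr_le_Ew k : (1 <= k)%N -> decr k <= (2 / Ew k) `^ (m - 1)^-1.
Proof.
case: k => [|k] // _; have [F1 F2] := andP (flux_range (ltn0Sn k)).
have E0 := Ew_gt0 (ltn0Sn k).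
rewrite /decr; apply: ler_powR2r.
- by rewrite invr_ge0 subr_ge0 ltW.
- by rewrite divr_ge0 ?(ltW E0) //; lra.
- by rewrite ler_pM2r ?invr_gt0.
Qed.

Definition cE : R := 2 `^ (1 + gam^-1).

(* Since [tau = q - (m - 1)], [Ew k * decr k ^ q = flux k * decr k ^ tau]
   and [decr k ^ tau <= (2 / Ew k) ^ (1 / gam) = 2 ^ (1 / gam) * psi k]. *)
Lemma Ew_decr_powR_le k : (1 <= k)%N -> Ew k * decr k `^ q <= cE * psi k.
Proof.
move=> k1; have E0 := Ew_gt0 k1; have [_ F2] := andP (flux_range k1).
have -> : q = (m - 1) + tau by rewrite /tau; ring.
rewrite gt0_powRD ?decr_gt0 // mulrA Ew_decr_flux /cE [2 `^ _]gt0_powRD // powRr1 //.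
rewrite -mulrA ler_pM ?powR_ge0 //; first by have [F1 _] := andP (flux_range k1); lra.
apply: le_trans (ler_powR2r (ltW tau_gt0) (decr_ge0 k) (decr_le_Ew k1)) _.
rewrite -powRrM (_ : (m - 1)^-1 * tau = gam^-1); last first.
  by rewrite /gam; field; rewrite !gt_eqF ?tau_gt0 // subr_gt0.
rewrite gt0_powRM ?invr_gt0 // gt0_powRV // Ew_powR // mulfV ?gt_eqF ?gam_gt0 //.
by rewrite powRr1 ?(ltW (xr_gt0 _)) // /psi -bet_div_gam.
Qed.

Definition cA : R := 2 `^ (m - 1)^-1 * (lg 1 `^ (bet / (m - 1)))^-1.

Lemma cA_ge0 : 0 <= cA.
Proof. by rewrite /cA mulr_ge0 ?invr_ge0 ?powR_ge0. Qed.

Lemma decr_le k : (1 <= k)%N -> decr k <= cA * xr k `^ (- (tau^-1 - 1 + 1)).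
Proof.
move=> k1; have mp : 0 < m - 1 by rewrite subr_gt0.
apply: le_trans (decr_le_Ew k1) _; rewrite subrK.
rewrite gt0_powRM ?invr_gt0 ?Ew_gt0 // gt0_powRV ?Ew_gt0 // Ew_powR // /cA -mulrA.
rewrite ler_pM2l ?powR_gt0 // (_ : gam * (m - 1)^-1 = tau^-1); last first.
  by rewrite /gam; field; rewrite !gt_eqF ?tau_gt0.
rewrite invfM mulrC powRN ler_pM ?invr_ge0 ?powR_ge0 //.
rewrite lef_pV2 ?posrE ?powR_gt0 ?lg_gt0 //.
by rewrite ler_powR2r ?divr_ge0 ?(ltW bet_gt0) ?(ltW mp) ?(ltW (lg_gt0 _)) ?lg_le.
Qed.

Lemma sum_xr_powRN_le d (r : R) : 0 < r ->
  \sum_(j < d) xr j.+1 `^ (- (r + 1)) <= (1 - xr d `^ (- r)) / r.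
Proof.
move=> r0; elim: d => [|d IH]; first by rewrite big_ord0 /xr powR1 subrr mul0r.
rewrite big_ord_recr /=.
have := powRN_B_ge (xr_gt0 d) (xr_le (leqnSn d)) r0.
have -> : r * ((xr d.+1 - xr d) / xr d.+1) * xr d.+1 `^ (- r) = r * xr d.+1 `^ (- (r + 1)).
  rewrite /xr -natrB // subSnn mul1r opprD gt0_powRD ?ltr0n // powR_inv1 ?ler0n //.
  by rewrite mulrAC -mulrA.
rewrite -ler_pdivlMl // => h.
move: IH; rewrite !mulrBl; lra.
Qed.

(* [decr k = O(k ^ (- 1 / tau))] and [tau < 1]. *)
Lemma sum_decr_le d : \sum_(j < d) decr j.+1 <= cA * (tau^-1 - 1)^-1.
Proof.
have r0 : 0 < tau^-1 - 1 by rewrite subr_gt0 invf_gt1 ?tau_gt0 ?tau_lt1.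
apply: (@le_trans _ _ (\sum_(j < d) cA * xr j.+1 `^ (- (tau^-1 - 1 + 1)))).
  by apply: ler_sum => j _; rewrite decr_le.
rewrite -mulr_sumr ler_wpM2l ?cA_ge0 //.
apply: le_trans (sum_xr_powRN_le d r0) _.
by rewrite -[Y in _ <= Y]mul1r ler_pM2r ?invr_gt0 // gerBl powR_ge0.
Qed.

Lemma Ew_decr_sum_le k : (1 <= k)%N ->
  (Ew k + Ew k.+1) * (decr k `^ q + decr k.+1 `^ q) <= (3 + cD) * cE * psi k.
Proof.
move=> k1.
have hk := Ew_decr_powR_le k1; have hk1 := Ew_decr_powR_le (ltn0Sn k).
have EkS : Ew k <= Ew k.+1 by apply: Ew_le.
have ESk : Ew k.+1 <= cD * Ew k by apply: EwS_le.
have hk1' : Ew k.+1 * decr k.+1 `^ q <= cE * psi k.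
  by apply: le_trans hk1 _; rewrite ler_pM2l ?powR_gt0 ?psiS_le.
have := ler_wpM2r (powR_ge0 (decr k.+1) q) EkS.
have := ler_wpM2r (powR_ge0 (decr k) q) ESk.
have := ler_wpM2l (powR_ge0 2 (gam + bet) : 0 <= cD) hk.
lra.
Qed.

Definition kap : R := Num.min (cF / ((3 + cD) * cE)) (cE * psi 1)^-1.

Lemma kap_gt0 : 0 < kap.
Proof.
have cE0 : 0 < cE by apply: powR_gt0.
have cD0 : 0 < cD by apply: powR_gt0.
rewrite /kap lt_min; apply/andP; split.
  by rewrite divr_gt0 ?cF_gt0 // mulr_gt0 // addr_gt0.
by rewrite invr_gt0 mulr_gt0 ?psi_gt0.
Qed.

Lemma flux_increment_ge d (up : R) : 0 <= up -> up <= kap ->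
  up * ((Ew d + Ew d.+1) * (decr d `^ q + decr d.+1 `^ q)) <=
  Ew d.+1 * decr d.+1 `^ (m - 1) - Ew d * decr d `^ (m - 1).
Proof.
move=> u0 uk; rewrite !Ew_decr_flux.
have cE0 : 0 < cE by rewrite powR_gt0.
case: d => [|k].
  have q0 : q != 0 by rewrite gt_eqF //; move: m1 qlo; lra.
  rewrite flux1 (_ : flux 0 = 0) // (_ : Ew 0 = 0) // (_ : decr 0 = 0) //.
  rewrite subr0 add0r powR0 // add0r.
  have up1 : up <= (cE * psi 1)^-1 by apply: le_trans uk _; rewrite ge_min lexx orbT.
  apply: le_trans (ler_wpM2l u0 (Ew_decr_powR_le (ltnSn 0))) _.
  by rewrite -ler_pdivlMr ?div1r // mulr_gt0 ?psi_gt0.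
have up1 : up <= cF / ((3 + cD) * cE) by apply: le_trans uk _; rewrite ge_min lexx.
apply: le_trans (fluxS_sub_ge (ltn0Sn k)).
apply: le_trans (ler_wpM2l u0 (Ew_decr_sum_le (ltn0Sn k))) _.
rewrite mulrA; apply: ler_wpM2r; first exact/ltW/psi_gt0.
by rewrite -ler_pdivlMr // mulr_gt0 // addr_gt0 // powR_gt0.
Qed.

Lemma mul_growth t : 0 < t ->
  t * growth t = t `^ (q / (q - m + 1)) * ln t `^ ((m - 1) / (q - m + 1) + eps).
Proof.
move=> t0; rewrite /growth -/tau -/gam -/bet mulrA -{1}(powRr1 (ltW t0)) -gt0_powRD //.
have := tau_gt0; rewrite /gam /tau => tau0.
by congr (_ `^ _ * _); field; rewrite gt_eqF.
Qed.

Lemma sum_Ew_asymp n : (2 <= n)%N ->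
  (2 `^ (1 + gam + bet))^-1 *
    (n%:R `^ (q / (q - m + 1)) * ln n%:R `^ ((m - 1) / (q - m + 1) + eps))
    <= \sum_(k <- iota 0 n.+1) Ew k.+1 /\
  \sum_(k <- iota 0 n.+1) Ew k.+1 <=
  2 `^ (1 + gam + bet) *
    (n%:R `^ (q / (q - m + 1)) * ln n%:R `^ ((m - 1) / (q - m + 1) + eps)).
Proof.
move=> n2; rewrite -mul_growth ?ltr0n ?(leq_trans _ n2) //.
by split; [apply: sum_Ew_ge | apply: sum_Ew_le].
Qed.

Section Potential.
Variable p : R.
Hypothesis p0 : p < 0.

Definition potential (k : nat) : R :=
  kap `^ p^-1 + cA * (tau^-1 - 1)^-1 - \sum_(i < k) decr i.+1.

Lemma potential_ge k : kap `^ p^-1 <= potential k.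
Proof. by rewrite /potential -addrA lerDl subr_ge0 sum_decr_le. Qed.

Lemma potential_gt0 k : 0 < potential k.
Proof. exact: lt_le_trans (powR_gt0 _ kap_gt0) (potential_ge k). Qed.

Lemma potential_powR_le k : potential k `^ p <= kap.
Proof.
apply: le_trans (le0_ler_powR2r (ltW p0) (powR_gt0 _ kap_gt0) (potential_ge k)) _.
rewrite -powRrM mulVf; last exact: ltr0_neq0.
by rewrite powRr1 // ltW // kap_gt0.
Qed.

Lemma potential_pred_sub k : potential k.-1 - potential k = decr k.
Proof. by case: k => [|k]; rewrite ?subrr // /potential big_ord_recr /=; ring. Qed.

Lemma potential_nonconstant : potential 0 != potential 1.
Proof.
by rewrite -subr_eq0 (potential_pred_sub 1) gt_eqF // decr_gt0.
Qed.

Lemma potential_supersolution (N : nat) (x : vtx N) : (1 < N)%N ->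
  mlap (radial_weight Ew) m (fun y => potential (depth y)) x +
  potential (depth x) `^ p * gradn (radial_weight Ew) (fun y => potential (depth y)) x `^ q
  <= 0.
Proof.
move=> N1; apply: (radial_supersolution (a := decr)) => //.
- by move=> k k0; apply: Ew_gt0.
- by move: qlo m1; lra.
- exact: potential_pred_sub.
- exact: decr_ge0.
- by move=> d; apply: flux_increment_ge; rewrite ?powR_ge0 ?potential_powR_le.
Qed.

End Potential.

End Profile.

Theorem mainTheorem10 (R : realType) (N : nat) (m p q eps : R) :
  (2 <= N)%N -> 1 < m -> p < 0 -> m - 1 < q -> q < m -> 0 < eps ->
  exists mu : vtx N -> vtx N -> R,
    is_weight mu /\
    (exists c C : R, 0 < c /\ 0 < C /\
      forall n : nat, (2 <= n)%N ->
        c * ((n%:R `^ (q / (q - m + 1))) *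
             (ln n%:R `^ ((m - 1) / (q - m + 1) + eps))) <= W mu n /\
        W mu n <= C * ((n%:R `^ (q / (q - m + 1))) *
             (ln n%:R `^ ((m - 1) / (q - m + 1) + eps)))) /\
    (exists u : vtx N -> R,
       (forall x, 0 < u x) /\
       (exists x y, u x != u y) /\
       (forall x, mlap mu m u x + u x `^ p * gradn mu u x `^ q <= 0)).
Proof.
move=> N2 m1 p0 qlo qhi eps0.
exists (radial_weight (Ew m q eps)); split.
  by apply: radial_weight_is_weight => // k; apply: Ew_gt0.
split.
  exists (2 `^ (1 + gam m q + bet m q eps))^-1, (2 `^ (1 + gam m q + bet m q eps)).
  split; first by rewrite invr_gt0 powR_gt0.
  split=> [|n n2]; first exact: powR_gt0.
  by rewrite W_radial_weight //; apply: sum_Ew_asymp.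
exists (fun y => potential m q eps p (depth y)); split.
  by move=> x; apply: potential_gt0.
split; last by move=> x; apply: potential_supersolution.
have v1 : validb N [:: 0%N] by rewrite /= andbT (leq_trans _ N2).
by exists (Defs.root N), (exist _ [:: 0%N] v1); apply: potential_nonconstant.
Qed.
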